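(* Consider an attack graph $G=(V,\mathcal{E})$ with source $v_s$ and a single defender $D_k$ owning assets $V_k\subseteq V\setminus\{v_s\}$ with losses $L_m\in[0,\infty)$, with investment vector $x_k=(x_{i,j})_{(v_i,v_j)\in\mathcal{E}}\in\mathbb{R}^{|\mathcal{E}|}_{\ge0}$. Assume every edge attack success probability function $p_{i,j}:[0,\infty)\to[0,1]$ is log-convex, strictly decreasing, and twice continuously differentiable on $[0,\infty)$, and let $\alpha_k\in(0,1]$. Then the perceived expected cost $$C_k(x_k)=\sum_{v_m\in V_k}L_m\max_{P\in\mathcal{P}_m}\prod_{(v_i,v_j)\in P}\exp\Big[-\big(-\log p_{i,j}(x_{i,j})\big)^{\alpha_k}\Big]$$ is convex in $x_k$.
   Context: An attack graph is a finite directed graph with a designated source node $v_s$; $\mathcal{P}_m$ denotes the (nonempty) set of directed paths from $v_s$ to $v_m$, each path viewed as its set of edges. $p_{i,j}(x_{i,j})$ is the probability that an attack from $v_i$ on $v_j$ succeeds given investment $x_{i,j}$ on that edge; $p\mapsto\exp[-(-\log p)^{\alpha_k}]$ is the Prelec probability weighting function. *)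

From HB Require Import structures.
From mathcomp Require Import all_boot all_order all_algebra.
From mathcomp Require Import all_classical all_reals all_analysis.
Set Implicit Arguments. Unset Strict Implicit. Unset Printing Implicit Defensive.
Import Order.TTheory GRing.Theory Num.Theory.
Import numFieldNormedType.Exports.
Local Open Scope ring_scope.
Local Open Scope classical_set_scope.

Definition edge (V : finType) (E : rel V) := {e : V * V | E e.1 e.2}.

(* P (a set of edges) is the edge set of a directed path from vs to vm
   (simple path: no repeated vertex). *)
Definition is_path_edges (V : finType) (E : rel V) (vs vm : V)
  (P : {set edge E}) : Prop :=
  exists s : seq V,
    [/\ uniq (vs :: s), path E vs s, last vs s = vm &
        P = finset (fun e : edge E => val e \in zip (vs :: s) s)].

Definition paths_to (V : finType) (E : rel V) (vs vm : V) : {set {set edge E}} :=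
  finset (fun P : {set edge E} => `[< is_path_edges vs vm P >]).

Definition prelec (R : realType) (alpha p : R) : R :=
  expR (- ((- ln p) `^ alpha)).

Definition perceived_cost (R : realType) (V : finType) (E : rel V) (vs : V)
  (Vk : {set V}) (L : V -> R) (p : edge E -> R -> R) (alpha : R)
  (x : edge E -> R) : R :=
  \sum_(m in Vk) L m *
     \big[Num.max/0]_(P in paths_to E vs m)
        \prod_(e in P) prelec alpha (p e (x e)).

Definition convex_on_nonneg (R : realType) (f : R -> R) : Prop :=
  forall x y t : R, 0 <= x -> 0 <= y -> 0 <= t <= 1 ->
    f (t * x + (1 - t) * y) <= t * f x + (1 - t) * f y.

Definition log_convex_nonneg (R : realType) (f : R -> R) : Prop :=
  convex_on_nonneg (fun x => ln (f x)).

Definition strictly_decreasing_nonneg (R : realType) (f : R -> R) : Prop :=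
  forall x y : R, 0 <= x -> x < y -> f y < f x.

(* twice continuously differentiable on [0, +oo): f is twice differentiable
   on (0, +oo) with continuous second derivative there, f is right-continuous
   at 0, and f', f'' extend continuously to 0 (have finite right limits). *)
Definition C2_nonneg (R : realType) (f : R -> R) : Prop :=
  [/\ forall x : R, 0 < x -> derivable f x 1 /\ derivable f^`() x 1,
      forall x : R, 0 < x -> {for x, continuous (f^`(2) : R -> R)},
      f x @[x --> (0 : R)^'+] --> f 0,
      cvg (f^`() x @[x --> (0 : R)^'+]) &
      cvg (f^`(2) x @[x --> (0 : R)^'+])].

Definition convex_on_orthant (R : realType) (I : Type) (C : (I -> R) -> R) : Prop :=
  forall (x y : I -> R) (t : R),
    (forall i, 0 <= x i) -> (forall i, 0 <= y i) -> 0 <= t <= 1 ->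
    C (fun i => t * x i + (1 - t) * y i) <= t * C x + (1 - t) * C y.

From HB Require Import structures.
From mathcomp Require Import all_boot all_order all_algebra.
From mathcomp Require Import all_classical all_reals all_analysis.
Import Order.TTheory GRing.Theory Num.Theory.
Import numFieldNormedType.Exports.
Local Open Scope ring_scope.

(* Log-convexity makes [- ln p] concave and nonnegative, and [u ^ alpha] is
   concave and nondecreasing for [0 < alpha <= 1] (it inverts the convex
   [u ^ (1 / alpha)]), so the exponent of each Prelec-weighted edge is concave
   and [exp] turns the sum over a path into a convex product.  Maxima and
   nonnegative combinations of convex functions are convex. *)

Section real_convexity.
Context {R : realType}.
Implicit Types a b r t : R.

Lemma expR_conv_le t a b : 0 <= t <= 1 ->
  expR (t * a + (1 - t) * b) <= t * expR a + (1 - t) * expR b.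
Proof. by case/andP=> t0 t1; have := convex_expR (Itv01 t0 t1) a b. Qed.

Lemma powR_conv_ge t a b r : 0 <= a -> 0 <= b -> 0 <= t <= 1 -> 0 < r <= 1 ->
  t * a `^ r + (1 - t) * b `^ r <= (t * a + (1 - t) * b) `^ r.
Proof.
move=> a0 b0 /andP[t0 t1] /andP[r0 r1].
have t1_ge0 : 0 <= 1 - t by rewrite subr_ge0.
have powRK c : 0 <= c -> (c `^ r) `^ r^-1 = c.
  by move=> c0; rewrite -powRrM mulfV ?gt_eqF ?powRr1.
have powRVK c : 0 <= c -> (c `^ r^-1) `^ r = c.
  by move=> c0; rewrite -powRrM mulVf ?gt_eqF ?powRr1.
have r1' : 1 <= r^-1 by rewrite invf_ge1.
have conv : (t * a `^ r + (1 - t) * b `^ r) `^ r^-1 <= t * a + (1 - t) * b.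
  have := convex_powR r1' (Itv01 t0 t1) (_ : a `^ r \in _) (_ : b `^ r \in _).
  by rewrite !inE /= !in_itv /= !powR_ge0 !powRK // => /(_ isT isT).
rewrite -[leLHS]powRVK ?addr_ge0 ?mulr_ge0 ?powR_ge0 //.
by apply: (ge0_ler_powR (ltW r0)); rewrite // nnegrE ?powR_ge0 ?addr_ge0 ?mulr_ge0.
Qed.

Lemma convex_on_nonneg_oppr_powR_oppr (g : R -> R) r :
  convex_on_nonneg g -> (forall z, 0 <= z -> g z <= 0) -> 0 < r <= 1 ->
  convex_on_nonneg (fun z => - (- g z) `^ r).
Proof.
move=> g_cvx g_le0 /[dup] r01 /andP[r0 _] x y t x0 y0 /[dup] t01 /andP[t0 t1].
have t1_ge0 : 0 <= 1 - t by rewrite subr_ge0.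
have Ng_ge0 z : 0 <= z -> 0 <= - g z by rewrite oppr_ge0; exact: g_le0.
have xy0 : 0 <= t * x + (1 - t) * y by rewrite addr_ge0 ?mulr_ge0.
rewrite !mulrN -opprD lerN2.
apply: le_trans (powR_conv_ge _ _ _ _ (Ng_ge0 _ x0) (Ng_ge0 _ y0) t01 r01) _.
apply: (ge0_ler_powR (ltW r0)); rewrite ?nnegrE ?Ng_ge0 ?addr_ge0 ?mulr_ge0 ?Ng_ge0 //.
by rewrite !mulrN -opprD lerN2 g_cvx.
Qed.

Lemma convex_on_nonneg_prelec_exponent (f : R -> R) r :
  (forall z, 0 <= z -> f z <= 1) -> log_convex_nonneg f -> 0 < r <= 1 ->
  convex_on_nonneg (fun z => - (- ln (f z)) `^ r).
Proof.
move=> f_le1 f_lcvx; apply: convex_on_nonneg_oppr_powR_oppr => // z z0.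
exact/ln_le0/f_le1.
Qed.

End real_convexity.

Section convex_on_orthant.
Context {R : realType} {I : Type}.
Implicit Types (C : (I -> R) -> R) (t : R).

Lemma convex_on_orthant_coord (f : R -> R) (i : I) :
  convex_on_nonneg f -> convex_on_orthant (fun x : I -> R => f (x i)).
Proof. by move=> f_cvx x y t x0 y0; exact: f_cvx. Qed.

Lemma convex_on_orthant_scale C w :
  0 <= w -> convex_on_orthant C -> convex_on_orthant (fun x => w * C x).
Proof.
move=> w0 C_cvx x y t x0 y0 t01.
by rewrite mulrCA [_ * (w * _)]mulrCA -mulrDr ler_wpM2l ?C_cvx.
Qed.

Lemma convex_on_orthant_sum (T : finType) (A : {set T}) (C : T -> (I -> R) -> R) :
  (forall m, m \in A -> convex_on_orthant (C m)) ->
  convex_on_orthant (fun x => \sum_(m in A) C m x).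
Proof.
move=> C_cvx x y t x0 y0 t01.
by rewrite !mulr_sumr -big_split ler_sum // => m mA; exact: C_cvx.
Qed.

Lemma convex_on_orthant_bigmax (T : finType) (A : {set T}) (C : T -> (I -> R) -> R) :
  (forall m, m \in A -> convex_on_orthant (C m)) ->
  convex_on_orthant (fun x => \big[Num.max/0]_(m in A) C m x).
Proof.
move=> C_cvx x y t x0 y0 /[dup] t01 /andP[t0 t1].
have t1_ge0 : 0 <= 1 - t by rewrite subr_ge0.
have bigmax_ge0 z : 0 <= \big[Num.max/0]_(m in A) C m z.
  by elim/big_rec: _ => // m v _ v0; rewrite le_max v0 orbT.
have le_bigmax z m : m \in A -> C m z <= \big[Num.max/0]_(m in A) C m z.
  by move=> mA; rewrite (bigD1 m) //= le_max lexx.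
elim/big_rec: _ => [|m v mA v_le]; first by rewrite addr_ge0 ?mulr_ge0.
rewrite ge_max v_le andbT; apply: le_trans (C_cvx m mA x y t x0 y0 t01) _.
by rewrite lerD ?ler_wpM2l ?le_bigmax.
Qed.

Lemma convex_on_orthant_expR C :
  convex_on_orthant C -> convex_on_orthant (fun x => expR (C x)).
Proof.
move=> C_cvx x y t x0 y0 t01.
by apply: le_trans (expR_conv_le _ _ _ t01); rewrite ler_expR C_cvx.
Qed.

End convex_on_orthant.

Theorem lemma2 (R : realType) (V : finType) (E : rel V) (vs : V)
  (Vk : {set V}) (L : V -> R) (p : edge E -> R -> R) (alpha : R) :
  vs \notin Vk ->
  (forall m, m \in Vk -> 0 <= L m) ->
  (forall m, m \in Vk -> paths_to E vs m != finset.set0) ->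
  (forall e x, 0 <= x -> 0 <= p e x <= 1) ->
  (forall e, log_convex_nonneg (p e)) ->
  (forall e, strictly_decreasing_nonneg (p e)) ->
  (forall e, C2_nonneg (p e)) ->
  0 < alpha <= 1 ->
  convex_on_orthant (@perceived_cost R V E vs Vk L p alpha).
Proof.
move=> _ L_ge0 _ p01 p_lcvx _ _ alpha01.
have p_le1 e z : 0 <= z -> p e z <= 1 by move=> /(p01 e) /andP[].
apply: convex_on_orthant_sum => m mVk.
apply: convex_on_orthant_scale; first exact: L_ge0.
apply: convex_on_orthant_bigmax => P _.
under eq_fun do rewrite /prelec -expR_sum.
apply/convex_on_orthant_expR/convex_on_orthant_sum => e _.
exact: convex_on_orthant_coord _ _
  (convex_on_nonneg_prelec_exponent _ _ (p_le1 e) (p_lcvx e) alpha01).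
Qed.
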